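(* There is a constant $c>0$ such that the following holds for all $n\ge 2$. Let $t$ be a qubit and $c_1,\dots,c_n$ qubits different from $t$. Let $U_1,\dots,U_n$ be $2\times 2$ unitaries that mutually commute ($U_iU_j=U_jU_i$ for all $i,j$), and let $G_i$ be the controlled-$U_i$ gate with control $c_i$ and target $t$. Then the operator $G_nG_{n-1}\cdots G_1$ can be embedded, using at most $cn$ ancillae, in a quantum circuit of depth at most $c\log n$.
   Context: Qubits have computational basis $|0\rangle,|1\rangle$. For a $2\times2$ unitary $U$, the controlled-$U$ gate on (control, target) is $\begin{pmatrix}I&0\\0&U\end{pmatrix}$, applying $U$ to the target when the control is $|1\rangle$. A one-layer circuit is a tensor product of arbitrary one-qubit and two-qubit unitary gates acting on pairwise disjoint sets of qubits; a circuit of depth $k$ is a product of $k$ one-layer circuits. An operator $F$ on $n'$ qubits is embedded in an operator $M$ on $n'+m$ qubits using $m$ ancillae if $M(|\psi\rangle\otimes|0\cdots0\rangle)=(F|\psi\rangle)\otimes|0\cdots0\rangle$ for all $|\psi\rangle$, where the last $m$ qubits are the ancillae. *)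

From Stdlib Require Import Reals.
From HB Require Import structures.
From mathcomp Require Import all_boot all_order all_algebra.
From mathcomp Require Import complex Rstruct.
Set Implicit Arguments. Unset Strict Implicit. Unset Printing Implicit Defensive.
Import Order.TTheory GRing.Theory Num.Theory.
Local Open Scope ring_scope.

Definition Cplx := (Rdefinitions.R)[i].

Definition basis (N : nat) := {ffun 'I_N -> bool}.

Definition op (N : nat) := basis N -> basis N -> Cplx.
Definition state (N : nat) := basis N -> Cplx.

Definition op_id N : op N := fun x y => (x == y)%:R.
Definition op_mul N (A B : op N) : op N :=
  fun x y => \sum_(z : basis N) A x z * B z y.
Definition op_apply N (A : op N) (v : state N) : state N :=
  fun x => \sum_(y : basis N) A x y * v y.

Definition unitary k (U : 'M[Cplx]_k) : Prop :=
  U *m (map_mx (@conjc _) U)^T = 1%:M.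

Definition bit2 (b : bool) : 'I_2 := inord (nat_of_bool b).
Definition bit4 (a b : bool) : 'I_4 := inord (2 * nat_of_bool a + nat_of_bool b).

Definition agree_off N (s : seq 'I_N) (x y : basis N) : bool :=
  [forall i, (i \notin s) ==> (x i == y i)].

(* one-qubit and two-qubit gates (the 4x4 matrix is w.r.t. the ordered pair
   (q1,q2), basis index 2*b_{q1} + b_{q2}) *)
Inductive gate (N : nat) :=
  | Gate1 of 'I_N & 'M[Cplx]_2
  | Gate2 of 'I_N & 'I_N & 'M[Cplx]_4.

Definition gate_support N (g : gate N) : seq 'I_N :=
  match g with Gate1 q _ => [:: q] | Gate2 q1 q2 _ => [:: q1; q2] end.

Definition gate_valid N (g : gate N) : Prop :=
  match g with
  | Gate1 _ U => unitary U
  | Gate2 q1 q2 U => q1 != q2 /\ unitary U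
  end.

(* the gate acting on the N-qubit system (tensored with identity elsewhere) *)
Definition gate_op N (g : gate N) : op N :=
  fun x y => (agree_off (gate_support g) x y)%:R *
    match g with
    | Gate1 q U => U (bit2 (x q)) (bit2 (y q))
    | Gate2 q1 q2 U => U (bit4 (x q1) (x q2)) (bit4 (y q1) (y q2))
    end.

(* a one-layer circuit: gates on pairwise disjoint sets of qubits; its operator
   (the tensor product of its gates) is the product of the gates' operators *)
Definition layer N := seq (gate N).
Definition layer_valid N (l : layer N) : Prop :=
  (forall g, List.In g l -> gate_valid g) /\ uniq (flatten (map (@gate_support N) l)).
Definition layer_op N (l : layer N) : op N :=
  foldr (@op_mul N) (@op_id N) (map (@gate_op N) l).

(* a circuit of depth k = list of k layers; the first layer is applied first *)
Definition circuit N := seq (layer N).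
Definition circuit_valid N (c : circuit N) : Prop :=
  forall l, List.In l c -> layer_valid l.
Definition circuit_op N (c : circuit N) : op N :=
  foldl (fun acc l => op_mul (layer_op l) acc) (@op_id N) c.

(* |psi> (x) |0...0>, ancillae are the last m qubits of n' + m *)
Definition with_zero_ancillae n' m (psi : state n') : state (n' + m) :=
  fun y => if [forall j : 'I_m, ~~ y (rshift n' j)]
           then psi [ffun i : 'I_n' => y (lshift m i)] else 0.

Definition embeds n' m (F : op n') (M : op (n' + m)) : Prop :=
  forall psi : state n',
    op_apply M (@with_zero_ancillae n' m psi) = @with_zero_ancillae n' m (op_apply F psi).

Definition ctrl_mx (U : 'M[Cplx]_2) : 'M[Cplx]_4 := @block_mx Cplx 2 2 2 2 1%:M 0 0 U.
Definition controlled N (c t : 'I_N) (U : 'M[Cplx]_2) : gate N := Gate2 c t (ctrl_mx U).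

Definition ctrl_product N n (t : 'I_N) (cs : 'I_n -> 'I_N) (Us : 'I_n -> 'M[Cplx]_2) : op N :=
  \big[(fun A B => op_mul B A)/@op_id N]_(i < n) gate_op (controlled (cs i) t (Us i)).

(* Commuting unitaries are simultaneously diagonalised by a single unitary P:
   U_i = P^* D_i P with D_i diagonal.  On a basis state x, G_n ... G_1 therefore
   applies to the target the matrix P^* D(x) P, where D(x) is the product of the
   D_i whose control is set in x.  The circuit applies P to the target and copies
   the target bit onto n ancillae with CNOT layers that double the number of
   copies, so that about log2 n layers suffice.  A single layer of controlled
   diagonal gates, one per distinct control qubit c, acting on its own copy of
   the target with the product of the D_i controlled by c, then multiplies each
   basis state by the entry of D(x) selected by the target bit.  Uncomputing the
   copies and applying P^* gives depth 2 log2 n + O(1) with n ancillae. *)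

From Stdlib Require Import Reals Lra FunctionalExtensionality.
From HB Require Import structures.
From mathcomp Require Import all_boot all_order all_algebra.
From mathcomp Require Import complex Rstruct zify.
Set Implicit Arguments. Unset Strict Implicit. Unset Printing Implicit Defensive.
Import GRing.Theory Num.Theory.
Local Open Scope ring_scope.
Local Open Scope sesquilinear_scope.

(** * Basis states and the action of gates *)

Definition set_qubit N (x : basis N) (q : 'I_N) (b : bool) : basis N :=
  [ffun r => if r == q then b else x r].

Section SetQubit.
Variables (N : nat) (x : basis N) (q : 'I_N).

Lemma set_qubit_same b : set_qubit x q b q = b.
Proof. by rewrite ffunE eqxx. Qed.

Lemma set_qubit_other b r : r != q -> set_qubit x q b r = x r.
Proof. by rewrite ffunE => /negbTE ->. Qed.

Lemma set_qubit_id b : x q = b -> set_qubit x q b = x.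
Proof. by move=> <-; apply/ffunP => r; rewrite ffunE; case: eqP => // ->. Qed.

Lemma set_qubit_twice b b' : set_qubit (set_qubit x q b) q b' = set_qubit x q b'.
Proof. by apply/ffunP => r; rewrite !ffunE; case: eqP. Qed.

End SetQubit.

Lemma agree_offP N (s : seq 'I_N) (x y : basis N) :
  reflect (forall r, r \notin s -> y r = x r) (agree_off s x y).
Proof.
apply: (iffP forallP) => [h r rs | h r]; first by have /implyP/(_ rs)/eqP := h r.
by apply/implyP => rs; rewrite h.
Qed.

Lemma sum_agree_off1 N (q : 'I_N) (x : basis N) (F : basis N -> Cplx) :
  \sum_y (agree_off [:: q] x y)%:R * F y = \sum_(b : bool) F (set_qubit x q b).
Proof.
rewrite (partition_big (fun y : basis N => y q) predT) //=; apply: eq_bigr => b _.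
rewrite (bigD1 (set_qubit x q b)) /= ?set_qubit_same ?eqxx //.
have -> : agree_off [:: q] x (set_qubit x q b).
  by apply/agree_offP => r; rewrite inE => /set_qubit_other ->.
rewrite mul1r big1 ?addr0 // => y /andP [/eqP yq ne].
case: agree_offP => [ag | _]; last by rewrite mul0r.
case/eqP: ne; apply/ffunP => r; rewrite ffunE.
by case: eqP => [-> | /eqP rq] //; rewrite ag ?inE.
Qed.

Lemma sum_agree_off2 N (q1 q2 : 'I_N) (x : basis N) (F : basis N -> Cplx) :
  q1 != q2 ->
  \sum_y (agree_off [:: q1; q2] x y)%:R * F y =
  \sum_(b1 : bool) \sum_(b2 : bool) F (set_qubit (set_qubit x q1 b1) q2 b2).
Proof.
move=> q12; rewrite pair_big /=.
rewrite (partition_big (fun y : basis N => (y q1, y q2)) predT) //=.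
apply: eq_bigr => -[b1 b2] _ /=; set x12 := set_qubit _ q2 b2.
have x12_1 : x12 q1 = b1 by rewrite set_qubit_other ?set_qubit_same.
rewrite (bigD1 x12) /= ?x12_1 ?set_qubit_same ?eqxx //.
have -> : agree_off [:: q1; q2] x x12.
  apply/agree_offP => r; rewrite !inE negb_or => /andP [r1 r2].
  by rewrite !set_qubit_other.
rewrite mul1r big1 ?addr0 // => y /andP [/eqP [y1 y2] ne].
case: agree_offP => [ag | _]; last by rewrite mul0r.
case/eqP: ne; apply/ffunP => r; rewrite !ffunE.
case: (r =P q2) => [-> | /eqP r2] //; case: (r =P q1) => [-> | /eqP r1] //.
by rewrite ag // !inE negb_or r1 r2.
Qed.

Lemma bit2_inj : injective bit2.
Proof. by move=> [] [] /(congr1 val); rewrite /= !inordK. Qed.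

Lemma sum_bit2 (V : nmodType) (F : 'I_2 -> V) : \sum_(k < 2) F k = \sum_(b : bool) F (bit2 b).
Proof.
rewrite big_bool !big_ord_recr big_ord0 /= add0r addrC.
by congr (F _ + F _); apply: val_inj; rewrite /= inordK.
Qed.

Lemma bit4_false b : bit4 false b = lshift 2 (bit2 b) :> 'I_(2 + 2).
Proof. by apply: val_inj; rewrite /= !inordK //; case: b. Qed.

Lemma bit4_true b : bit4 true b = rshift 2 (bit2 b) :> 'I_(2 + 2).
Proof. by apply: val_inj; rewrite /= !inordK //; case: b. Qed.

Lemma ctrl_mx_bit4 (U : 'M[Cplx]_2) a b a' b' :
  ctrl_mx U (bit4 a b) (bit4 a' b') =
  if a && a' then U (bit2 b) (bit2 b') else ((a == a') && (b == b'))%:R.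
Proof.
rewrite /ctrl_mx; case: a; case: a'; rewrite ?bit4_false ?bit4_true.
- exact: (block_mxEdr (1%:M : 'M[Cplx]_2) 0 0 U).
- by rewrite (block_mxEdl (1%:M : 'M[Cplx]_2) 0 0 U) mxE.
- by rewrite (block_mxEur (1%:M : 'M[Cplx]_2) 0 0 U) mxE.
- by rewrite (block_mxEul (1%:M : 'M[Cplx]_2) 0 0 U) mxE (inj_eq bit2_inj).
Qed.

Lemma op_apply_mul N (A B : op N) (w : state N) :
  op_apply (op_mul A B) w = op_apply A (op_apply B w).
Proof.
apply: functional_extensionality => x; rewrite /op_apply /op_mul.
under eq_bigr do rewrite mulr_suml.
rewrite exchange_big /=; apply: eq_bigr => z _.
by rewrite mulr_sumr; apply: eq_bigr => y _; rewrite mulrA.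
Qed.

Lemma op_apply_id N (w : state N) : op_apply (@op_id N) w = w.
Proof.
apply: functional_extensionality => x; rewrite /op_apply /op_id.
rewrite (bigD1 x) //= eqxx mul1r big1 ?addr0 // => y /negbTE.
by rewrite eq_sym => ->; rewrite mul0r.
Qed.

Lemma op_apply_circuit N (c : circuit N) (w : state N) :
  op_apply (circuit_op c) w = foldl (fun w l => op_apply (layer_op l) w) w c.
Proof.
rewrite /circuit_op -{2}(op_apply_id w).
by elim: c (@op_id N) => [|l c IH] A //=; rewrite IH op_apply_mul.
Qed.

(* [W x] is the matrix applied to qubit [q]; its dependence on the other
   qubits of [x] models controls. *)
Definition qubit_act N (q : 'I_N) (W : basis N -> 'M[Cplx]_2) (w : state N) : state N :=
  fun x => \sum_(b : bool) W x (bit2 (x q)) (bit2 b) * w (set_qubit x q b).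

Lemma qubit_act1 N (q : 'I_N) (w : state N) : qubit_act q (fun _ => 1%:M) w = w.
Proof.
apply: functional_extensionality => x; rewrite /qubit_act big_bool !mxE !(inj_eq bit2_inj).
by case xq: (x q); rewrite /= ?mul1r ?mul0r ?addr0 ?add0r set_qubit_id.
Qed.

Lemma qubit_act_comp N (q : 'I_N) (W1 W2 : basis N -> 'M[Cplx]_2) (w : state N) :
  (forall x b, W2 (set_qubit x q b) = W2 x) ->
  qubit_act q W1 (qubit_act q W2 w) = qubit_act q (fun x => W1 x *m W2 x) w.
Proof.
move=> W2q; apply: functional_extensionality => x; rewrite /qubit_act.
under eq_bigr do rewrite W2q set_qubit_same mulr_sumr.
rewrite exchange_big /=; apply: eq_bigr => b' _.
rewrite mxE sum_bit2 mulr_suml; apply: eq_bigr => b _.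
by rewrite set_qubit_twice mulrA.
Qed.

Lemma qubit_act_diag N (q : 'I_N) (e : basis N -> 'rV[Cplx]_2) (w : state N) :
  qubit_act q (fun x => diag_mx (e x)) w = fun x => e x 0 (bit2 (x q)) * w x.
Proof.
apply: functional_extensionality => x; rewrite /qubit_act big_bool !mxE !(inj_eq bit2_inj).
by case xq: (x q); rewrite /= ?mulr1n ?mulr0n ?mul0r ?addr0 ?add0r set_qubit_id.
Qed.

Lemma gate1_act N (q : 'I_N) (U : 'M[Cplx]_2) (w : state N) :
  op_apply (gate_op (Gate1 q U)) w = qubit_act q (fun _ => U) w.
Proof.
apply: functional_extensionality => x; rewrite /op_apply /gate_op /=.
under eq_bigr do rewrite -mulrA.
by rewrite sum_agree_off1; apply: eq_bigr => b _; rewrite set_qubit_same.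
Qed.

Lemma controlled_act N (c a : 'I_N) (U : 'M[Cplx]_2) (w : state N) : c != a ->
  op_apply (gate_op (controlled c a U)) w =
  qubit_act a (fun x => if x c then U else 1%:M) w.
Proof.
move=> ca; apply: functional_extensionality => x; rewrite /op_apply /gate_op /=.
under eq_bigr do rewrite -mulrA.
rewrite sum_agree_off2 // /qubit_act.
have set_c b1 b2 : set_qubit (set_qubit x c b1) a b2 c = b1.
  by rewrite set_qubit_other ?set_qubit_same // eq_sym.
under eq_bigr do under eq_bigr do rewrite set_c set_qubit_same ctrl_mx_bit4.
rewrite big_bool /= !big_bool.
by case xc: (x c); case xa: (x a); rewrite /= ?mxE ?(inj_eq bit2_inj) /=
  ?mul1r ?mul0r ?add0r ?addr0 ?(set_qubit_id xc) ?(set_qubit_id xa).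
Qed.

Lemma ctrl_product_act N n (t : 'I_N) (cs : 'I_n -> 'I_N) (Us : 'I_n -> 'M[Cplx]_2)
    (w : state N) :
  (forall i, cs i != t) ->
  op_apply (ctrl_product t cs Us) w =
  qubit_act t (fun x => \big[(fun A B => B *m A)/1%:M]_(i < n | x (cs i)) Us i) w.
Proof.
move=> cs_t; rewrite /ctrl_product; elim: (index_enum 'I_n) w => [|i r IH] w.
  by rewrite big_nil op_apply_id -[LHS](qubit_act1 t); congr qubit_act;
    apply: functional_extensionality => x; rewrite big_nil.
rewrite big_cons op_apply_mul IH controlled_act // qubit_act_comp; last first.
  by move=> x b; rewrite set_qubit_other.
congr qubit_act; apply: functional_extensionality => x.
by rewrite big_cons; case: (x (cs i)); rewrite ?mulmx1.
Qed.

(** * Simultaneous diagonalisation of commuting unitaries *)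

Section CommutingUnitaries.
Variable C : numClosedFieldType.

Lemma trmxC_mul m n p (A : 'M[C]_(m, n)) (B : 'M[C]_(n, p)) :
  (A *m B)^t* = B^t* *m A^t*.
Proof. by rewrite trmx_mul map_mxM. Qed.

Lemma comm_mx_trC n (A B : 'M[C]_n) : A \is unitarymx ->
  comm_mx A B -> comm_mx (A^t*) B.
Proof.
move=> /unitarymxP AA' AB; have A'A : A^t* *m A = 1%:M by apply: mulmx1C.
rewrite /comm_mx -[B *m _]mul1mx -A'A -!mulmxA; congr (_ *m _).
by rewrite mulmxA AB -mulmxA AA' mulmx1.
Qed.

Lemma trig_trC_is_diag n (T : 'M[C]_n) :
  is_trig_mx T -> is_trig_mx (T^t*) -> is_diag_mx T.
Proof.
move=> Ttrig /is_trig_mxP T'trig; rewrite is_diag_mxEtrig Ttrig /=.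
apply/is_trig_mxP => i j lt_ij; have /eqP := T'trig i j lt_ij.
by rewrite !mxE conjC_eq0 => /eqP.
Qed.

Lemma commuting_unitary_codiag n k (Us : 'I_k -> 'M[C]_n) :
  (forall i, Us i \is unitarymx) -> (forall i j, comm_mx (Us i) (Us j)) ->
  exists P (d : 'I_k -> 'rV[C]_n), [/\ P \is unitarymx,
    forall i, diag_mx (d i) \is unitarymx & forall i, Us i = P^t* *m diag_mx (d i) *m P].
Proof.
move=> Uu Ucomm.
(* Triangularising the adjoints as well makes every conjugate lower triangular too. *)
pose As := [seq Us i | i <- enum 'I_k] ++ [seq (Us i)^t* | i <- enum 'I_k].
have AsP A : A \in As -> exists i, A = Us i \/ A = (Us i)^t*.
  by rewrite mem_cat => /orP [] /mapP [i _ ->]; exists i; [left | right].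
have [|P Pu /allP /= Ptrig] := @cotrigonalization C n As.
  move=> _ _ /AsP [i [] ->] /AsP [j [] ->].
  - exact: Ucomm.
  - by apply/esym/comm_mx_trC.
  - exact: comm_mx_trC.
  - by apply/comm_mx_trC => //; apply/esym/comm_mx_trC.
have conjP A : A \in As -> is_trig_mx (P *m A *m P^t*).
  move=> /Ptrig; rewrite /similar_to /= conjumx ?unitarymx_unit // invmx_unitary //.
have Udiag i : is_diag_mx (P *m Us i *m P^t*).
  apply: trig_trC_is_diag.
    by apply: conjP; rewrite mem_cat map_f ?mem_enum.
  rewrite !trmxC_mul trmxCK mulmxA.
  by apply: conjP; rewrite mem_cat; apply/orP; right; apply: map_f; rewrite mem_enum.
have dE i : diag_mx (\row_j (P *m Us i *m P^t*) j j) = P *m Us i *m P^t*.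
  by have /diag_mxP [d ->] := Udiag i; congr diag_mx; apply/rowP => j; rewrite !mxE eqxx.
exists P, (fun i => \row_j (P *m Us i *m P^t*) j j); split => // i; rewrite dE.
  by rewrite !mul_unitarymx ?trmxC_unitary.
by rewrite !mulmxA (mulmxKtV _ Pu) // (mulmx1C (unitarymxP Pu)) mul1mx.
Qed.

Lemma diag_mx_prod n (I : Type) (r : seq I) (c : pred I) (d : I -> 'rV[C]_n.+1) :
  \prod_(i <- r | c i) diag_mx (d i) = diag_mx (\row_k \prod_(i <- r | c i) d i 0 k).
Proof.
elim: r => [|i r IH].
  by apply/matrixP => k l; rewrite big_nil !mxE big_nil.
rewrite big_cons; case ci: (c i); rewrite IH -?mulmxE ?mulmx_diag;
  by congr diag_mx; apply/rowP => k; rewrite !mxE big_cons ci.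
Qed.

Lemma rev_prod_unitary_conj n (I : Type) (r : seq I) (c : pred I) (P : 'M[C]_n)
    (U : I -> 'M[C]_n) (d : I -> 'rV[C]_n) :
  P \is unitarymx -> (forall i, U i = P^t* *m diag_mx (d i) *m P) ->
  \big[(fun A B => B *m A)/1%:M]_(i <- r | c i) U i =
  P^t* *m diag_mx (\row_k \prod_(i <- r | c i) d i 0 k) *m P.
Proof.
move=> /unitarymxP PP' dU; have P'P : P^t* *m P = 1%:M by apply: mulmx1C.
elim: r => [|i r IH].
  rewrite !big_nil -P'P; congr (_ *m _); rewrite -[LHS]mulmx1.
  by congr (_ *m _); apply/matrixP => k l; rewrite !mxE big_nil.
rewrite big_cons; case ci: (c i); rewrite IH; last first.
  by congr (_ *m diag_mx _ *m _); apply/rowP => k; rewrite !mxE big_cons ci.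
rewrite dU !mulmxA -(mulmxA _ P) PP' mulmx1 -(mulmxA (P^t*)) mulmx_diag.
by congr (_ *m diag_mx _ *m _); apply/rowP => k; rewrite !mxE big_cons ci mulrC.
Qed.
End CommutingUnitaries.

Lemma unitaryE k (U : 'M[Cplx]_k) : unitary U <-> U \is unitarymx.
Proof. by rewrite /unitary map_trmx; split => [h | /unitarymxP //]; apply/unitarymxP. Qed.

Lemma ctrl_mx_unitary (U : 'M[Cplx]_2) : U \is unitarymx -> unitary (ctrl_mx U).
Proof.
move=> /unitarymxP UU'.
suff : (block_mx 1%:M 0 0 U : 'M[Cplx]_(2 + 2)) *m
       (block_mx 1%:M 0 0 U : 'M[Cplx]_(2 + 2)) ^t* = 1%:M by rewrite /unitary map_trmx.
rewrite tr_block_mx map_block_mx mulmx_block.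
rewrite !trmx0 trmx1 map_mx1 !map_mx0 !mulmx0 !mul0mx !mulmx1 !addr0 !add0r.
by rewrite UU' -scalar_mx_block.
Qed.

Definition pauliX : 'M[Cplx]_2 := \matrix_(i, j) (i != j)%:R.

Lemma pauliX_unitary : pauliX \is unitarymx.
Proof.
apply/unitarymxP/matrixP => i j; rewrite !mxE !big_ord_recr big_ord0 /= !mxE !rmorph_nat.
by case: i j => [[|[|?]] ?] [[|[|?]] ?]; rewrite //= ?mulr0 ?mulr1 ?add0r ?addr0.
Qed.

(** * Layers of gates *)

Lemma cnot_act N (c a : 'I_N) (w : state N) : c != a ->
  op_apply (gate_op (controlled c a pauliX)) w =
  fun x => w (set_qubit x a (x a (+) x c)).
Proof.
move=> ca; rewrite controlled_act //; apply: functional_extensionality => x.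
rewrite /qubit_act big_bool; case: (x c); case xa: (x a);
  by rewrite !mxE ?(inj_eq bit2_inj) /= ?mul1r ?mul0r ?addr0 ?add0r ?(set_qubit_id xa).
Qed.

Lemma controlled_diag_act N (c a : 'I_N) (e : 'rV[Cplx]_2) (w : state N) : c != a ->
  op_apply (gate_op (controlled c a (diag_mx e))) w =
  fun x => (if x c then e 0 (bit2 (x a)) else 1) * w x.
Proof.
move=> ca; rewrite controlled_act //.
rewrite (_ : (fun x : basis N => _) = fun x => diag_mx (if x c then e else const_mx 1)).
  by rewrite qubit_act_diag; apply: functional_extensionality => x; case: (x c); rewrite ?mxE.
by apply: functional_extensionality => x; case: (x c); rewrite ?diag_const_mx.
Qed.

Lemma layer_act_perm N (I : eqType) (g : I -> gate N) (f : I -> basis N -> basis N)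
    (s : seq I) (w : state N) :
  (forall i, i \in s -> forall w, op_apply (gate_op (g i)) w = fun x => w (f i x)) ->
  op_apply (layer_op (map g s)) w = fun x => w (foldl (fun y i => f i y) x s).
Proof.
elim: s w => [|i s IH] w gf /=; first by rewrite /layer_op /= op_apply_id.
rewrite /layer_op /= op_apply_mul -/(layer_op (map g s)) IH ?gf ?mem_head //.
by move=> i' i's; apply: gf; rewrite inE i's orbT.
Qed.

Lemma layer_act_diag N (I : Type) (g : I -> gate N) (phi : I -> basis N -> Cplx)
    (s : seq I) (w : state N) :
  (forall i w, op_apply (gate_op (g i)) w = fun x => phi i x * w x) ->
  op_apply (layer_op (map g s)) w = fun x => (\prod_(i <- s) phi i x) * w x.
Proof.
move=> gphi; elim: s w => [|i s IH] w /=; apply: functional_extensionality => x.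
  by rewrite /layer_op /= op_apply_id big_nil mul1r.
by rewrite /layer_op /= op_apply_mul -/(layer_op (map g s)) IH gphi big_cons mulrA.
Qed.

Lemma layer_act1 N (g : gate N) (w : state N) :
  op_apply (layer_op [:: g]) w = op_apply (gate_op g) w.
Proof. by rewrite /layer_op /= op_apply_mul op_apply_id. Qed.

Lemma gate1_layer_valid N (q : 'I_N) (U : 'M[Cplx]_2) :
  U \is unitarymx -> layer_valid [:: Gate1 q U].
Proof. by move=> Uu; split => // _ [<- | []]; apply/unitaryE. Qed.

Section XorLayer.
Variables (N : nat) (I : eqType) (tgt src : I -> 'I_N).

Definition xor_layer (s : seq I) (y : basis N) : basis N :=
  foldl (fun y i => set_qubit y (tgt i) (y (tgt i) (+) y (src i))) y s.

Lemma xor_layerP (s : seq I) : uniq (map tgt s) ->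
  {in s &, forall i j, src i != tgt j} -> forall y,
  (forall i, i \in s -> xor_layer s y (tgt i) = y (tgt i) (+) y (src i)) /\
  (forall r, r \notin map tgt s -> xor_layer s y r = y r).
Proof.
elim: s => [|i s IH] /=; first by split => // r; rewrite in_nil.
move=> /andP [tgt_i tgt_s] src_tgt y.
have src_tgt' : {in s &, forall i j, src i != tgt j}.
  by move=> i' j' i's j's; apply: src_tgt; rewrite inE ?i's ?j's orbT.
have [IH_tgt IH_other] := IH tgt_s src_tgt' (set_qubit y (tgt i) (y (tgt i) (+) y (src i))).
split => [i' | r]; last first.
  by rewrite inE negb_or => /andP [ri rs]; rewrite IH_other // set_qubit_other.
rewrite inE => /predU1P [-> | i's]; first by rewrite IH_other // set_qubit_same.
have ti' : tgt i' != tgt i by apply: contraNneq tgt_i => <-; apply: map_f.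
rewrite IH_tgt // !set_qubit_other //.
by apply: src_tgt; rewrite inE ?i's ?eqxx ?orbT.
Qed.

End XorLayer.

Lemma perm_flatten_pairs (T : eqType) (I : Type) (f g : I -> T) (s : seq I) :
  perm_eq (flatten [seq [:: f i; g i] | i <- s]) (map f s ++ map g s).
Proof.
elim: s => //= i s /permP IH; apply/permP => p.
by have := IH p; rewrite /= !count_cat /=; lia.
Qed.

Lemma In_mem (T : eqType) (x : T) (s : seq T) : List.In x s -> x \in s.
Proof. by elim: s => //= y s IH [-> | /IH]; rewrite inE ?eqxx // => ->; rewrite orbT. Qed.

Lemma controlled_layer_valid N (I : Type) (c a : I -> 'I_N) (U : I -> 'M[Cplx]_2)
    (s : seq I) :
  (forall i, U i \is unitarymx) -> uniq (map c s ++ map a s) ->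
  layer_valid (map (fun i => controlled (c i) (a i) (U i)) s).
Proof.
move=> Uu uniq_ca; split; last first.
  by rewrite -map_comp (perm_uniq (perm_flatten_pairs c a s)).
move=> _ /List.in_map_iff [i [<- i_s]]; split; last exact: ctrl_mx_unitary.
move: uniq_ca; rewrite cat_uniq => /and3P [_ /hasPn /(_ (a i)) ai _].
have /In_mem ai_s := List.in_map a s i i_s; have /In_mem ci_s := List.in_map c s i i_s.
by apply: contraNneq (ai ai_s) => <-.
Qed.

(** * Fanning out the target qubit *)

Lemma foldr_rev_involutive (T I : Type) (f : I -> T -> T) (s : seq I) (y : T) :
  (forall j, involutive (f j)) -> foldr f (foldr f y (rev s)) s = y.
Proof.
move=> f_inv; elim: s y => [|j s IH] y //=.
by rewrite rev_cons -cats1 foldr_cat /= IH f_inv.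
Qed.

Definition ord_subn n (i : 'I_n) (k : nat) : 'I_n :=
  Ordinal (leq_ltn_trans (leq_subr k i) (ltn_ord i)).

Section FanOut.
Variables (N n : nat) (t : 'I_N).
Local Close Scope ring_scope.

Definition anc (i : 'I_n) : 'I_(N + n) := rshift N i.
Definition tgt : 'I_(N + n) := lshift n t.

Definition in_round (j : nat) (i : 'I_n) : bool := 2 ^ j <= i.+1 < 2 ^ j.+1.
Definition round (j : nat) : seq 'I_n := [seq i <- enum 'I_n | in_round j i].

(* In round [j] the ancillae [2^j - 1 <= i < 2^(j+1) - 1] receive a copy of the
   target: the first from the target itself, the others from ancilla [i - 2^j]. *)
Definition fan_src (j : nat) (i : 'I_n) : 'I_(N + n) :=
  if 2 ^ j <= i then anc (ord_subn i (2 ^ j)) else tgt.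

Definition fan_layer (j : nat) : layer (N + n) :=
  map (fun i => controlled (fan_src j i) (anc i) pauliX) (round j).

Definition fan_step (j : nat) : basis (N + n) -> basis (N + n) :=
  xor_layer anc (fan_src j) (round j).

Definition fanned (y : basis (N + n)) (p : nat) : basis (N + n) :=
  [ffun r => if split r is inr i then (i.+1 < p) && y tgt else y r].

Lemma anc_inj : injective anc. Proof. exact: rshift_inj. Qed.

Lemma mem_round j i : (i \in round j) = in_round j i.
Proof. by rewrite mem_filter mem_enum andbT. Qed.

Lemma fan_src_anc j i i' : in_round j i -> in_round j i' -> fan_src j i != anc i'.
Proof.
rewrite /in_round /fan_src expnS => /andP [_ lt_i] /andP [le_i' _].
case: ifP => le_ji; last by rewrite eq_lrshift.
by rewrite (inj_eq anc_inj) -val_eqE /=; lia.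
Qed.

Lemma fan_src_inj j : {in round j &, injective (fan_src j)}.
Proof.
move=> i i'; rewrite !mem_round /in_round /fan_src => /andP [le_i _] /andP [le_i' _].
case: ifP => ji; case: ifP => ji'.
- by move/anc_inj/(congr1 val); rewrite /= => e; apply: ord_inj; lia.
- by move/eqP; rewrite eq_rlshift.
- by move/eqP; rewrite eq_lrshift.
- by move=> _; apply: ord_inj; lia.
Qed.

Lemma fan_layer_uniq j : uniq (map (fan_src j) (round j) ++ map anc (round j)).
Proof.
have round_uniq : uniq (round j) by rewrite filter_uniq ?enum_uniq.
rewrite cat_uniq (map_inj_in_uniq (@fan_src_inj j)) (map_inj_uniq anc_inj) round_uniq /=.
rewrite andbT; apply/hasPn => _ /mapP [i' i'_in ->]; apply/mapP => -[i i_in /eqP].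
by rewrite eq_sym; apply/negP; apply: fan_src_anc; rewrite -mem_round.
Qed.

Lemma fanned_sys y p q : fanned y p (lshift n q) = y (lshift n q).
Proof. by rewrite ffunE (unsplitK (inl q)). Qed.

Lemma fanned_anc y p i : fanned y p (anc i) = (i.+1 < p) && y tgt.
Proof. by rewrite ffunE (unsplitK (inr i)). Qed.

Lemma fan_stepP j y :
  (forall i, i \in round j -> fan_step j y (anc i) = y (anc i) (+) y (fan_src j i)) /\
  (forall r, r \notin map anc (round j) -> fan_step j y r = y r).
Proof.
apply: xor_layerP; first by rewrite (map_inj_uniq anc_inj) filter_uniq ?enum_uniq.
by move=> i i'; rewrite !mem_round; apply: fan_src_anc.
Qed.

Lemma fan_step_fanned j y : fan_step j (fanned y (2 ^ j)) = fanned y (2 ^ j.+1).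
Proof.
have [step_round step_other] := fan_stepP j (fanned y (2 ^ j)).
apply/ffunP => r; case: (split_ordP r) => [q | i] ->.
  by rewrite step_other ?fanned_sys //; apply/mapP => -[i _ /eqP]; rewrite eq_lrshift.
have -> : rshift N i = anc i by [].
have [i_in | i_out] := boolP (i \in round j).
  rewrite step_round // !fanned_anc /fan_src; move: i_in; rewrite mem_round /in_round.
  case/andP => le_i lt_i; rewrite lt_i ltnNge le_i /=.
  case: ifP => le_ji; last by rewrite fanned_sys.
  by rewrite fanned_anc (_ : (i - 2 ^ j).+1 < 2 ^ j) //; rewrite expnS in lt_i; lia.
rewrite step_other ?(mem_map anc_inj) // !fanned_anc; congr (_ && _).
by move: i_out; rewrite mem_round /in_round expnS negb_and -!ltnNge; lia.
Qed.

Lemma fan_step_involutive j : involutive (fan_step j).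
Proof.
move=> y; have [step_round step_other] := fan_stepP j y.
have [step_round' step_other'] := fan_stepP j (fan_step j y).
apply/ffunP => r; have [/mapP [i i_in ->] | r_out] := boolP (r \in map anc (round j)).
  rewrite step_round' // step_round // step_other -?addbA ?addbb ?addbF //.
  by apply/mapP => -[i' i'_in /eqP]; apply/negP/fan_src_anc; rewrite -mem_round.
by rewrite step_other' // step_other.
Qed.

Lemma fan_forward k (y : basis (N + n)) : (forall i, y (anc i) = false) ->
  foldr fan_step y (rev (iota 0 k)) = fanned y (2 ^ k).
Proof.
move=> y_anc; elim: k => [|k IH].
  apply/ffunP => r; case: (split_ordP r) => [q | i] ->; first by rewrite fanned_sys.
  by rewrite (fanned_anc y 1 i) y_anc.
by rewrite -addn1 iotaD rev_cat /= IH add0n addn1 fan_step_fanned.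
Qed.

Lemma fan_layers_act s (w : state (N + n)) :
  foldl (fun w l => op_apply (layer_op l) w) w (map fan_layer s) =
  fun x => w (foldr fan_step x s).
Proof.
elim: s w => [|j s IH] w //=; rewrite IH /fan_layer (layer_act_perm
  (f := fun i y => set_qubit y (anc i) (y (anc i) (+) y (fan_src j i)))) //.
by move=> i; rewrite mem_round => i_in w'; apply: cnot_act; apply: fan_src_anc.
Qed.

Lemma fan_layer_valid j : layer_valid (fan_layer j).
Proof. by apply: controlled_layer_valid (fan_layer_uniq j) => _; apply: pauliX_unitary. Qed.
End FanOut.

(** * Gathering the phases of gates with a common control *)

Section PhaseLayer.
Variables (N n : nat) (cs : 'I_n -> 'I_N) (d : 'I_n -> 'rV[Cplx]_2).
Local Close Scope ring_scope.

Definition first_ctrl (j : 'I_n) : 'I_n := [arg min_(i < j | cs i == cs j) i].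
Definition ctrl_reps : seq 'I_n := [seq r <- enum 'I_n | first_ctrl r == r].

Definition ctrl_phase (r : 'I_n) : 'rV[Cplx]_2 := \row_k (\prod_(j | cs j == cs r) d j 0 k)%R.

(* One gate for each distinct control qubit [cs r], [r] being its first index:
   its target is ancilla [r], and its phases are those of all the gates sharing
   that control. *)
Definition phase_layer : layer (N + n) :=
  map (fun r => controlled (lshift n (cs r)) (anc N r) (diag_mx (ctrl_phase r))) ctrl_reps.

Lemma first_ctrlP j : cs (first_ctrl j) = cs j /\ forall i, cs i = cs j -> first_ctrl j <= i.
Proof.
rewrite /first_ctrl; case: arg_minnP => // m /eqP cs_m min_m.
by split => // i /eqP; apply: min_m.
Qed.

Lemma first_ctrl_eq j j' : cs j = cs j' -> first_ctrl j = first_ctrl j'.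
Proof.
move=> cs_jj'; have [cs_f min_f] := first_ctrlP j; have [cs_f' min_f'] := first_ctrlP j'.
apply/val_inj/eqP; rewrite eqn_leq min_f ?min_f' //; first by rewrite cs_f.
by rewrite cs_f' cs_jj'.
Qed.

Lemma first_ctrl_rep j : first_ctrl (first_ctrl j) = first_ctrl j.
Proof. by apply: first_ctrl_eq; case: (first_ctrlP j). Qed.

Lemma prod_ctrl_reps (c : pred 'I_N) k :
  (\prod_(r <- ctrl_reps | c (cs r)) ctrl_phase r 0 k = \prod_(j | c (cs j)) d j 0 k)%R.
Proof.
rewrite /ctrl_reps big_filter_cond big_enum_cond /= big_mkcondr.
rewrite [RHS](partition_big first_ctrl (fun r => first_ctrl r == r)) /=; last first.
  by move=> j _; rewrite first_ctrl_rep.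
apply: eq_bigr => r /eqP rep_r; rewrite mxE.
have first_ctrlE j : (first_ctrl j == r) = (cs j == cs r).
  apply/eqP/eqP => [<- | cs_j]; first by case: (first_ctrlP j).
  by rewrite (first_ctrl_eq cs_j) rep_r.
rewrite (eq_bigl (fun j => c (cs r) && (cs j == cs r))) => [|j]; last first.
  by rewrite first_ctrlE; case: (cs j =P cs r) => [-> | _]; rewrite ?andbF.
by case: (c (cs r)) => //; rewrite big_pred0.
Qed.

Lemma phase_layer_act (w : state (N + n)) :
  op_apply (layer_op phase_layer) w =
  fun x => (\prod_(r <- ctrl_reps | x (lshift n (cs r)))
              ctrl_phase r 0 (bit2 (x (anc N r))) * w x)%R.
Proof.
rewrite /phase_layer (layer_act_diag (phi := fun r x =>
  if x (lshift n (cs r)) then ctrl_phase r 0 (bit2 (x (anc N r))) else 1)%R).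
  by apply: functional_extensionality => x; rewrite [in RHS]big_mkcond.
by move=> r w'; apply: controlled_diag_act; rewrite eq_lrshift.
Qed.

Lemma phase_layer_valid : (forall j, diag_mx (d j) \is unitarymx) -> layer_valid phase_layer.
Proof.
move=> d_unitary; apply: controlled_layer_valid => [r | ].
  rewrite -(diag_mx_prod _ (fun j => cs j == cs r)).
  apply: (big_ind (fun A : 'M_2 => A \is unitarymx)) => //; last exact: mul_unitarymx.
  by apply/unitarymxP; rewrite trmx1 map_mx1 mulmx1.
have reps_uniq : uniq ctrl_reps by rewrite filter_uniq ?enum_uniq.
rewrite cat_uniq (map_inj_uniq (@rshift_inj _ _)) reps_uniq andbT /=.
rewrite map_inj_in_uniq ?reps_uniq /=.
  by apply/hasPn => _ /mapP [r _ ->]; apply/mapP => -[r' _ /eqP]; rewrite /anc eq_shift.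
move=> r r'; rewrite !mem_filter => /andP [/eqP rep_r _] /andP [/eqP rep_r' _] /lshift_inj cs_rr'.
by rewrite -rep_r -rep_r'; apply: first_ctrl_eq.
Qed.
End PhaseLayer.

(** * The circuit *)

Definition sys_part N m (x : basis (N + m)) : basis N := [ffun i => x (lshift m i)].

Lemma sys_partE N m (x : basis (N + m)) i : sys_part x i = x (lshift m i).
Proof. exact: ffunE. Qed.

Lemma with_zero_ancillae_act N m (q : 'I_N) (W : basis N -> 'M[Cplx]_2) (psi : state N) :
  @with_zero_ancillae N m (qubit_act q W psi) =
  qubit_act (lshift m q) (fun x => W (sys_part x)) (@with_zero_ancillae N m psi).
Proof.
apply: functional_extensionality => x; rewrite /with_zero_ancillae /qubit_act.
have anc_set b : [forall j, ~~ set_qubit x (lshift m q) b (rshift N j)] =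
                 [forall j, ~~ x (rshift N j)].
  by apply: eq_forallb => j; rewrite set_qubit_other // eq_rlshift.
have sys_set b : [ffun i => set_qubit x (lshift m q) b (lshift m i)] = set_qubit (sys_part x) q b.
  by apply/ffunP => i; rewrite !ffunE (inj_eq (@lshift_inj _ _)).
under [RHS]eq_bigr do rewrite anc_set sys_set.
case: ifP => _; last by rewrite big1 // => b _; rewrite mulr0.
by rewrite ffunE.
Qed.

Lemma with_zero_ancillae_anc N m (psi : state N) (x : basis (N + m)) (i : 'I_m) :
  x (rshift N i) -> @with_zero_ancillae N m psi x = 0.
Proof. by move=> x_i; rewrite /with_zero_ancillae; case: forallP => // /(_ i); rewrite x_i. Qed.

Section RealBounds.
Local Open Scope R_scope.

Lemma INR_expn2 k : INR (2 ^ k)%N = 2 ^ k.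
Proof. by elim: k => [|k IH] //; rewrite expnS -multE mult_INR IH /=; lra. Qed.

Lemma ln_le_ln x y : 0 < x -> x <= y -> ln x <= ln y.
Proof.
move=> x_gt0 /Rle_lt_or_eq_dec [x_lt | ->]; last exact: Rle_refl.
exact/Rlt_le/ln_increasing.
Qed.

Lemma fanout_depth_bound n : (2 <= n)%N ->
  INR (2 * (trunc_log 2 n).+1 + 3) <= 14 * ln (INR n).
Proof.
move=> n_ge2; set k := trunc_log 2 n.
have pow_le : 2 ^ k <= INR n.
  by rewrite -INR_expn2; apply: le_INR; apply/ssrnat.leP; apply: trunc_logP; lia.
have : INR k * ln 2 <= ln (INR n).
  by rewrite -ln_pow; [apply: ln_le_ln => //; apply: pow_lt | ]; lra.
have : ln 2 <= ln (INR n).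
  by apply: ln_le_ln; [lra | apply: (le_INR 2); apply/ssrnat.leP].
have := ln_lt_2; have := pos_INR k.
rewrite !(plus_INR, mult_INR) S_INR /=; nra.
Qed.
End RealBounds.

Section Circuit.
Variables (N n : nat) (t : 'I_N) (cs : 'I_n -> 'I_N) (P : 'M[Cplx]_2) (d : 'I_n -> 'rV[Cplx]_2).

Definition fan_phase_unfan k : seq (layer (N + n)) :=
  map (fan_layer n t) (iota 0 k) ++ phase_layer cs d :: map (fan_layer n t) (rev (iota 0 k)).

Definition ctrl_product_circuit k : circuit (N + n) :=
  [:: Gate1 (tgt n t) P] :: fan_phase_unfan k ++ [:: [:: Gate1 (tgt n t) (P^t*)]].

Lemma fan_phase_unfan_act k (w : state (N + n)) :
  (n < 2 ^ k)%N -> (forall (x : basis (N + n)) i, x (anc N i) -> w x = 0) ->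
  foldl (fun w l => op_apply (layer_op l) w) w (fan_phase_unfan k) =
  fun x => (\prod_(j | x (lshift n (cs j))) d j 0 (bit2 (x (tgt n t)))) * w x.
Proof.
move=> n_lt w_anc; rewrite foldl_cat fan_layers_act /= fan_layers_act phase_layer_act.
apply: functional_extensionality => x.
rewrite foldr_rev_involutive; last exact: fan_step_involutive.
have [x_anc | /forallPn [i /negPn x_i]] := boolP [forall i, ~~ x (anc N i)]; last first.
  by rewrite !(w_anc x i) ?mulr0.
rewrite fan_forward => [|i]; last by apply/negbTE; move/forallP: x_anc.
rewrite -(prod_ctrl_reps cs d (fun q => x (lshift n q))); congr (_ * _).
apply: eq_big => [r | r _]; first by rewrite fanned_sys.
by rewrite fanned_anc (leq_ltn_trans (ltn_ord r) n_lt).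
Qed.

Lemma size_ctrl_product_circuit k : size (ctrl_product_circuit k) = (2 * k + 3)%N.
Proof. by rewrite /= size_cat /= size_cat /= !size_map size_rev size_iota; lia. Qed.

Lemma ctrl_product_circuit_valid k : P \is unitarymx ->
  (forall j, diag_mx (d j) \is unitarymx) -> circuit_valid (ctrl_product_circuit k).
Proof.
move=> Pu d_unitary l /=; rewrite !List.in_app_iff /= => -[<- | [[/List.in_map_iff [j [<- _]] |
  [<- | /List.in_map_iff [j [<- _]]]] | [<- | []]]].
- exact: gate1_layer_valid.
- exact: fan_layer_valid.
- exact: phase_layer_valid.
- exact: fan_layer_valid.
- by apply: gate1_layer_valid; rewrite trmxC_unitary.
Qed.

Lemma ctrl_product_circuit_embeds k (Us : 'I_n -> 'M[Cplx]_2) :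
  (forall i, cs i != t) -> P \is unitarymx -> (forall i, Us i = P^t* *m diag_mx (d i) *m P) ->
  (n < 2 ^ k)%N -> embeds (ctrl_product t cs Us) (circuit_op (ctrl_product_circuit k)).
Proof.
move=> cs_t Pu Udiag n_lt psi.
pose D (y : basis N) := \row_k' (\prod_(j | y (cs j)) d j 0 k').
have D_t y b : D (set_qubit y t b) = D y.
  by apply/rowP => k'; rewrite !mxE; apply: eq_bigl => j; rewrite set_qubit_other.
rewrite op_apply_circuit /= foldl_cat /= !layer_act1 !gate1_act.
rewrite -(with_zero_ancillae_act _ _ (fun _ => P)) fan_phase_unfan_act //; last first.
  by move=> x i; apply: with_zero_ancillae_anc.
rewrite (_ : (fun x => _) = qubit_act (tgt n t) (fun x => diag_mx (D (sys_part x)))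
                               (@with_zero_ancillae N n (qubit_act t (fun _ => P) psi))).
  rewrite -(with_zero_ancillae_act _ _ (fun y => diag_mx (D y))).
  rewrite -(with_zero_ancillae_act _ _ (fun _ => P^t*)).
  rewrite qubit_act_comp => [|y b]; last by rewrite D_t.
  rewrite qubit_act_comp // ctrl_product_act //; congr with_zero_ancillae.
  congr qubit_act; apply: functional_extensionality => y.
  by rewrite (rev_prod_unitary_conj _ _ Pu Udiag).
rewrite (qubit_act_diag _ (fun x => D (sys_part x))); apply: functional_extensionality => x.
by rewrite mxE; congr (_ * _); apply: eq_bigl => j; rewrite sys_partE.
Qed.
End Circuit.

Theorem proposition4 :
  exists c : Rdefinitions.R, (0 < c)%R /\
  forall (n : nat), (2 <= n)%N ->
  forall (N : nat) (t : 'I_N) (cs : 'I_n -> 'I_N) (Us : 'I_n -> 'M[Cplx]_2),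
    (forall i, cs i != t) ->
    (forall i, unitary (Us i)) ->
    (forall i j, Us i *m Us j = Us j *m Us i) ->
    exists (m : nat) (circ : circuit (N + m)),
      (INR m <= c * INR n)%R /\
      (INR (size circ) <= c * ln (INR n))%R /\
      circuit_valid circ /\
      embeds (ctrl_product t cs Us) (circuit_op circ).
Proof.
exists (IZR 14); split=> [|n n_ge2 N t cs Us cs_t Uu Ucomm]; first exact/RltP/(IZR_lt 0 14).
have [P [d [Pu d_unitary Udiag]]] :=
  commuting_unitary_codiag (fun i => (unitaryE _).1 (Uu i)) Ucomm.
pose k := (trunc_log 2 n).+1.
exists n, (ctrl_product_circuit t cs P d k); split; [|split; [|split]].
- by apply/RleP; rewrite -RmultE; have := pos_INR n; lra.
- by rewrite size_ctrl_product_circuit; apply/RleP/fanout_depth_bound.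
- exact: ctrl_product_circuit_valid.
- exact/ctrl_product_circuit_embeds/trunc_log_ltn.
Qed.
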